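(* Let $K\ge1$, $T\ge1$ and $\ell_1,\dots,\ell_T\in[0,1]^K$. For $t\ge1$ let $c_t=1$ if $t=1$ or if there exists an expert $k$ such that $L_{t-1,k}=L^*_{t-1}$ while $L_{t,k}\ne L^*_t$, and $c_t=0$ otherwise; let $C_T=\sum_{t=1}^Tc_t$. Then the regret of Follow-the-Leader satisfies \[ \mathcal{R}^{\mathrm{ftl}}_T=\Delta^{(\infty)}_T\le C_T. \]
   Context: Hedge setting: $K$ experts; $L_{t,k}=\sum_{s=1}^t\ell_{s,k}$ ($L_{0,k}=0$), $L^*_t=\min_kL_{t,k}$. Follow-the-Leader (Hedge with learning rate $\infty$) plays in round $t$ the weights $w_t$ uniform on $\{k:L_{t-1,k}=L^*_{t-1}\}$, suffering $h_t=\sum_kw_{t,k}\ell_{t,k}$; its regret is $\mathcal{R}^{\mathrm{ftl}}_T=\sum_{t\le T}h_t-L^*_T$. Its mix loss is $m_t=L^*_t-L^*_{t-1}$, mixability gap $\delta^{(\infty)}_t=h_t-m_t$, and $\Delta^{(\infty)}_T=\sum_{t=1}^T\delta^{(\infty)}_t$. *)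

From HB Require Import structures.
From mathcomp Require Import all_boot all_order all_algebra.
Set Implicit Arguments. Unset Strict Implicit. Unset Printing Implicit Defensive.
Import Order.TTheory GRing.Theory Num.Theory.
Local Open Scope ring_scope.

Section Hedge.
Variables (R : realFieldType) (K : nat).
(* losses: ell t k = loss of expert k in round t (rounds t = 1, 2, ...) *)
Variable ell : nat -> 'I_K -> R.

Definition cumL (t : nat) (k : 'I_K) : R := \sum_(1 <= s < t.+1) ell s k.

(* L*_t = min_k L_{t,k}  (the head default is irrelevant when K >= 1) *)
Definition Lstar (t : nat) : R :=
  let s := [seq cumL t k | k <- enum 'I_K] in foldr Num.min (head 0 s) s.

Definition leaders (t : nat) : {set 'I_K} :=
  [set k | cumL t.-1 k == Lstar t.-1].

Definition ftl_w (t : nat) (k : 'I_K) : R :=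
  if k \in leaders t then (#|leaders t|%:R)^-1 else 0.

Definition ftl_h (t : nat) : R := \sum_k ftl_w t k * ell t k.

Definition ftl_regret (T : nat) : R := \sum_(1 <= t < T.+1) ftl_h t - Lstar T.

Definition ftl_m (t : nat) : R := Lstar t - Lstar t.-1.
Definition ftl_delta (t : nat) : R := ftl_h t - ftl_m t.
Definition ftl_Delta (T : nat) : R := \sum_(1 <= t < T.+1) ftl_delta t.

Definition leader_change (t : nat) : bool :=
  (t == 1)%N ||
  [exists k : 'I_K, (cumL t.-1 k == Lstar t.-1) && (cumL t k != Lstar t)].
Definition C_count (T : nat) : R := \sum_(1 <= t < T.+1) (leader_change t)%:R.
End Hedge.

(** Summing the mix losses telescopes to [L*_T - L*_0 = L*_T], which gives
    [R^ftl_T = Delta_T].  In a round without leader change every leader of the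
    previous round is still a leader, so all of them suffer exactly the mix
    loss [m_t] and the gap [delta_t] vanishes; in any other round [delta_t <= 1]
    because [h_t] is an average of losses in [[0, 1]] and [m_t >= 0]. *)
From HB Require Import structures.
From mathcomp Require Import all_boot all_order all_algebra.
Import Order.TTheory GRing.Theory Num.Theory.
Local Open Scope ring_scope.

Lemma foldr_min_le (R : realDomainType) (s : seq R) x0 x :
  x \in s -> foldr Num.min x0 s <= x.
Proof.
elim: s => [//|a s IH] /=; rewrite in_cons => /orP[/eqP->|xs].
  by rewrite ge_min lexx.
by rewrite ge_min IH // orbT.
Qed.

Lemma foldr_min_mem (R : realDomainType) (s : seq R) x0 :
  foldr Num.min x0 s \in x0 :: s.
Proof.
elim: s => [|a s IH] /=; first by rewrite mem_head.
rewrite !in_cons; case: (leP a (foldr Num.min x0 s)) => _; first by rewrite eqxx orbT.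
by move: IH; rewrite in_cons => /orP[->|->]; rewrite ?orbT.
Qed.

Section FollowTheLeader.
Variables (R : realFieldType) (K : nat) (ell : nat -> 'I_K -> R).

Lemma cumLS t k : cumL ell t.+1 k = cumL ell t k + ell t.+1 k.
Proof. by rewrite /cumL big_nat_recr. Qed.

Lemma Lstar_le_cumL t k : Lstar ell t <= cumL ell t k.
Proof. by apply: foldr_min_le; apply: map_f; rewrite mem_enum. Qed.

Hypothesis K_gt0 : (0 < K)%N.

Lemma Lstar_attained t : exists k, cumL ell t k = Lstar ell t.
Proof.
pose s := [seq cumL ell t k | k <- enum 'I_K].
have head_s : head 0 s \in s.
  rewrite /s; case: (enum 'I_K) (mem_enum predT (Ordinal K_gt0)) => //= k e _.
  exact: mem_head.
have /mapP[k _ ->] : Lstar ell t \in s.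
  rewrite /Lstar -/s; move: (@foldr_min_mem _ s (head 0 s)).
  by rewrite in_cons => /orP[/eqP->|].
by exists k.
Qed.

Lemma Lstar0 : Lstar ell 0 = 0.
Proof. by have [k <-] := Lstar_attained 0; rewrite /cumL big_geq. Qed.

Lemma leaders_card_gt0 t : (0 < #|leaders ell t|)%N.
Proof.
by have [k hk] := Lstar_attained t.-1; apply/card_gt0P; exists k; rewrite inE hk.
Qed.

Lemma ftl_hE t :
  ftl_h ell t = (#|leaders ell t|%:R)^-1 * \sum_(k in leaders ell t) ell t k.
Proof.
rewrite /ftl_h mulr_sumr [RHS]big_mkcond /=; apply: eq_bigr => k _.
by rewrite /ftl_w; case: ifP => _; rewrite ?mul0r.
Qed.

Lemma ftl_regret_Delta T : ftl_regret ell T = ftl_Delta ell T.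
Proof.
rewrite /ftl_regret /ftl_Delta /ftl_delta /ftl_m sumrB.
congr (_ - _); rewrite (telescope_sumr_eq (fun t => Lstar ell t.-1)) //=.
by rewrite Lstar0 subr0.
Qed.

Lemma ftl_h_le1 t : (forall k, ell t k <= 1) -> ftl_h ell t <= 1.
Proof.
move=> ell_le1; have n_gt0 := leaders_card_gt0 t.
rewrite ftl_hE ler_pdivrMl ?ltr0n // mulr1 -[X in _ <= X%:R]sum1_card natr_sum.
by apply: ler_sum => k _.
Qed.

Lemma ftl_m_ge0 t : (forall k, 0 <= ell t.+1 k) -> 0 <= ftl_m ell t.+1.
Proof.
move=> ell_ge0; rewrite /ftl_m /=; have [k <-] := Lstar_attained t.+1.
by rewrite subr_ge0 cumLS (le_trans (Lstar_le_cumL t k)) // lerDl.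
Qed.

Lemma ftl_delta_no_leader_change t :
  ~~ leader_change ell t.+1 -> ftl_delta ell t.+1 = 0.
Proof.
rewrite /leader_change => /norP[_ /existsPn stay].
have leader_loss k : k \in leaders ell t.+1 -> ell t.+1 k = ftl_m ell t.+1.
  rewrite inE /= => /eqP lead_t; move: (stay k); rewrite /= lead_t eqxx negbK.
  by rewrite /ftl_m /= => /eqP <-; rewrite cumLS -lead_t addrC addKr.
have n_neq0 : (#|leaders ell t.+1|%:R : R) != 0.
  by rewrite pnatr_eq0 -lt0n leaders_card_gt0.
rewrite /ftl_delta ftl_hE (eq_bigr _ leader_loss) sumr_const mulrnAr -mulrnAl.
by rewrite -[_^-1 *+ _]mulr_natr mulVf // mul1r subrr.
Qed.

Lemma ftl_delta_le_leader_change t :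
  (forall k, 0 <= ell t.+1 k <= 1) ->
  ftl_delta ell t.+1 <= (leader_change ell t.+1)%:R.
Proof.
move=> ell01; case: (boolP (leader_change ell t.+1)) => [_|stay].
  have ell_ge0 k : 0 <= ell t.+1 k by case/andP: (ell01 k).
  have ell_le1 k : ell t.+1 k <= 1 by case/andP: (ell01 k).
  by rewrite /ftl_delta lerBlDr (le_trans (ftl_h_le1 _ ell_le1)) ?lerDl ?ftl_m_ge0.
by rewrite ftl_delta_no_leader_change.
Qed.

End FollowTheLeader.

Theorem lemma9 (R : realFieldType) (K T : nat) (ell : nat -> 'I_K -> R) :
  (1 <= K)%N -> (1 <= T)%N ->
  (forall t k, (1 <= t <= T)%N -> 0 <= ell t k <= 1) ->
  ftl_regret ell T = ftl_Delta ell T /\ ftl_Delta ell T <= C_count ell T.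
Proof.
move=> K_gt0 _ ell01; split; first exact: ftl_regret_Delta.
apply: ler_sum_nat => -[//|t] /andP[_ tT].
by apply: ftl_delta_le_leader_change => // k; apply: ell01.
Qed.
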